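(* Let $g$ solve system (S3) with initial data $h_{ii}>0$, $h_{11}\le h_{22}\le h_{33}$, and suppose $h\in D_S$, i.e. the solution of the planar system (P) starting at $(b_0,c_0)=(h_{00}^{1/3}h_{22},h_{00}^{1/3}h_{33})$ converges to $P_1$. Then the solution exists for all $t\ge 0$ and as $t\to\infty$: $g_{00}\to0$; $g_{11},g_{22},g_{33}\to\infty$; $g_{22}/g_{11}\to4$ and $g_{22}/g_{33}\to1$.
   Context: Let $\det h = h_{00}h_{11}h_{22}h_{33}$, $\beta=\frac{1}{6(\det h)^2}$, $p(x,y,z) = x^4 - x^3(y+z) + x^2yz + x(-y^3+y^2z+yz^2-z^3) + y^4 - y^3z - yz^3 + z^4$, $q(x,y,z) = 5x^4 - 3x^3(y+z) + x^2yz + x(y^3-y^2z-yz^2+z^3) - 3y^4 + 3y^3z + 3yz^3 - 3z^4$, $r(x,y,z) = \tfrac12(p+3q)(x,y,z) = 8x^4-5x^3(y+z)+2x^2yz+x(y^3-y^2z-yz^2+z^3)-4y^4+4y^3z+4yz^3-4z^4$. System (S3): $\dot g_{00} = -\beta\,p(g_{11},g_{22},g_{33})\,g_{00}^3$, $\dot g_{11} = -\beta\,q(g_{11},g_{22},g_{33})\,g_{00}^2g_{11}$, $\dot g_{22} = -\beta\,q(g_{22},g_{33},g_{11})\,g_{00}^2g_{22}$, $\dot g_{33} = -\beta\,q(g_{33},g_{11},g_{22})\,g_{00}^2g_{33}$, $g_{ii}(0)=h_{ii}$ (Bach flow on $\mathbb{R}\times\mathbb{S}^3$ in a diagonalizing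 frame; $g_{00}g_{11}g_{22}g_{33}=\det h$ is preserved). Set $a=g_{00}^{1/3}g_{11}$, $b=g_{00}^{1/3}g_{22}$, $c=g_{00}^{1/3}g_{33}$, so $abc=\det h$. Under (S3), $(b,c)$ follows, up to a time reparametrization, the planar system (P): $\dot b=-\tfrac23 r(b,a,c)\,b$, $\dot c=-\tfrac23 r(c,a,b)\,c$ with $a=\det h/(bc)$, on the region $a\le b\le c$. $P_0$ is the point $b=c=(\det h)^{1/3}$ (where $a=b=c$), and $P_1$ is the point $b=c=(4\det h)^{1/3}$ (where $4a=b=c$). $D_S$ is the set of initial metrics whose (P)-trajectory converges to $P_1$ (the stable manifold of the saddle $P_1$); $D_\infty$ the set whose (P)-trajectory has $b,c\to\infty$; $D_{L_0}$ the set whose (P)-trajectory converges to $P_0$. *)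

From Stdlib Require Import Reals Lra.
Open Scope R_scope.

Definition pp (x y z : R) : R :=
  x^4 - x^3*(y+z) + x^2*y*z + x*(-y^3 + y^2*z + y*z^2 - z^3)
  + y^4 - y^3*z - y*z^3 + z^4.

Definition qq (x y z : R) : R :=
  5*x^4 - 3*x^3*(y+z) + x^2*y*z + x*(y^3 - y^2*z - y*z^2 + z^3)
  - 3*y^4 + 3*y^3*z + 3*y*z^3 - 3*z^4.

Definition rr (x y z : R) : R := (pp x y z + 3 * qq x y z) / 2.

Definition tends_to_at_infty (f : R -> R) (l : R) : Prop :=
  forall eps, 0 < eps -> exists T, forall t, T <= t -> Rabs (f t - l) < eps.

Definition tends_to_infty (f : R -> R) : Prop :=
  forall M, exists T, forall t, T <= t -> M < f t.

Definition right_cont_at0 (f : R -> R) : Prop :=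
  forall eps, 0 < eps -> exists delta, 0 < delta /\
    forall t, 0 <= t < delta -> Rabs (f t - f 0) < eps.

Definition S3_global_solution (h0 h1 h2 h3 : R) (g0 g1 g2 g3 : R -> R) : Prop :=
  let deth := h0 * h1 * h2 * h3 in
  let beta := 1 / (6 * deth ^ 2) in
  g0 0 = h0 /\ g1 0 = h1 /\ g2 0 = h2 /\ g3 0 = h3 /\
  right_cont_at0 g0 /\ right_cont_at0 g1 /\ right_cont_at0 g2 /\ right_cont_at0 g3 /\
  forall t, 0 < t ->
    derivable_pt_lim g0 t (- beta * pp (g1 t) (g2 t) (g3 t) * (g0 t)^3) /\
    derivable_pt_lim g1 t (- beta * qq (g1 t) (g2 t) (g3 t) * (g0 t)^2 * g1 t) /\
    derivable_pt_lim g2 t (- beta * qq (g2 t) (g3 t) (g1 t) * (g0 t)^2 * g2 t) /\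
    derivable_pt_lim g3 t (- beta * qq (g3 t) (g1 t) (g2 t) * (g0 t)^2 * g3 t).

(* (b,c) solves the planar system (P) (with a = deth/(b c)) on [0,+infinity),
   staying in the positive quadrant, with initial value (b0,c0). *)
Definition P_global_solution (deth b0 c0 : R) (b c : R -> R) : Prop :=
  b 0 = b0 /\ c 0 = c0 /\ right_cont_at0 b /\ right_cont_at0 c /\
  (forall t, 0 <= t -> 0 < b t /\ 0 < c t) /\
  forall t, 0 < t ->
    derivable_pt_lim b t (- (2/3) * rr (b t) (deth / (b t * c t)) (c t) * b t) /\
    derivable_pt_lim c t (- (2/3) * rr (c t) (deth / (b t * c t)) (b t) * c t).

(* h in D_S: the (P)-trajectory from (h0^(1/3) h2, h0^(1/3) h3) converges to
   P1 = ((4 deth)^(1/3), (4 deth)^(1/3)). *)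
Definition in_D_S (h0 h1 h2 h3 : R) : Prop :=
  let deth := h0 * h1 * h2 * h3 in
  exists b c : R -> R,
    P_global_solution deth (Rpower h0 (1/3) * h2) (Rpower h0 (1/3) * h3) b c /\
    tends_to_at_infty b (Rpower (4 * deth) (1/3)) /\
    tends_to_at_infty c (Rpower (4 * deth) (1/3)).

From Stdlib Require Import Reals Ranalysis5 Lra Psatz.
From Coquelicot Require Import Coquelicot.
Open Scope R_scope.

(** Writing [w = g00^(1/3)], the pair [(w g22, w g33)] solves (P) after the time change
    [ds/dt = beta w^2], and along the (P)-trajectory [w = w(0) exp(-1/3 int pp(a,b,c) ds)].
    Read backwards, these formulas turn the (P)-trajectory into a global solution of (S3);
    uniqueness for (P), a Gronwall estimate, shows that every solution is of this form.
    At [P1] we have [b = c = L] and [a = L/4], so [pp(a,b,c)] tends to [pp(L/4,L,L) > 0]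
    and [int pp] grows linearly: [w -> 0] and [s -> oo], and the limits of [g] follow from
    those of [(a,b,c)]. *)

(** * Calculus on [0, +oo) *)

Lemma continuity_pt_eps f x :
  continuity_pt f x <->
  forall eps, 0 < eps -> exists d, 0 < d /\
    forall y, Rabs (y - x) < d -> Rabs (f y - f x) < eps.
Proof.
  split.
  - intros Hf eps Heps. destruct (Hf eps Heps) as [d [Hd Hy]].
    exists d. split; [lra|]. intros y Hyx.
    destruct (Req_dec y x) as [->|Hne].
    + rewrite Rminus_diag, Rabs_R0; lra.
    + apply Hy. split; [split; [exact I|congruence]|exact Hyx].
  - intros Hf eps Heps. destruct (Hf eps Heps) as [d [Hd Hy]].
    exists d. split; [lra|]. intros y [_ Hyx]. apply Hy, Hyx.
Qed.

Lemma right_cont_at0_continuity_pt f : continuity_pt f 0 -> right_cont_at0 f.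
Proof.
  intros Hf eps Heps. destruct (proj1 (continuity_pt_eps f 0) Hf eps Heps) as [d [Hd Hy]].
  exists d. split; [exact Hd|]. intros t Ht. apply Hy. rewrite Rminus_0_r, Rabs_right; lra.
Qed.

Lemma continuity_pt_derivable_pt_lim f x l : derivable_pt_lim f x l -> continuity_pt f x.
Proof. intros Hf. apply derivable_continuous_pt. exists l. exact Hf. Qed.

Lemma continuity_const_fun a : continuity (fun _ => a).
Proof. apply continuity_const. intros ? ?; reflexivity. Qed.

Lemma continuity_pow_fun f n : continuity f -> continuity (fun x => f x ^ n).
Proof.
  intros Hf x. apply (continuity_pt_comp f (fun z => z ^ n)); [apply Hf|].
  apply derivable_continuous_pt, derivable_pt_pow.
Qed.

Lemma continuity_exp_fun f : continuity f -> continuity (fun x => exp (f x)).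
Proof.
  intros Hf x. apply (continuity_pt_comp f exp); [apply Hf|].
  apply derivable_continuous_pt, derivable_pt_exp.
Qed.

Lemma continuity_comp_fun f g : continuity f -> continuity g -> continuity (fun x => g (f x)).
Proof. intros Hf Hg x. apply continuity_pt_comp; [apply Hf|apply Hg]. Qed.

Ltac continuity_tac :=
  repeat first [ assumption | apply continuity_plus | apply continuity_minus
               | apply continuity_mult | apply continuity_opp | apply continuity_pow_fun
               | apply continuity_exp_fun | apply continuity_const_fun ].

Lemma derivable_pt_lim_pow_fun f x l n : derivable_pt_lim f x l ->
  derivable_pt_lim (fun y => f y ^ n) x (INR n * f x ^ pred n * l).
Proof.
  intros Hf. apply (derivable_pt_lim_comp f (fun z => z ^ n)); [exact Hf|].
  apply derivable_pt_lim_pow.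
Qed.

Lemma derivable_pt_lim_sqr_fun f x l : derivable_pt_lim f x l ->
  derivable_pt_lim (fun y => f y ^ 2) x (2 * f x * l).
Proof.
  intros Hf. replace (2 * f x * l) with (INR 2 * f x ^ pred 2 * l) by (simpl; ring).
  apply derivable_pt_lim_pow_fun, Hf.
Qed.

Lemma derivable_pt_lim_exp_fun f x l : derivable_pt_lim f x l ->
  derivable_pt_lim (fun y => exp (f y)) x (exp (f x) * l).
Proof.
  intros Hf. apply (derivable_pt_lim_comp f exp); [exact Hf|].
  apply derivable_pt_lim_exp.
Qed.

Lemma derivable_pt_lim_inv_fun f x l : f x <> 0 -> derivable_pt_lim f x l ->
  derivable_pt_lim (fun y => / f y) x (- l / f x ^ 2).
Proof.
  intros Hfx Hf.
  assert (Hd := derivable_pt_lim_div (fct_cte 1) f x 0 l (derivable_pt_lim_const 1 x) Hf Hfx).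
  replace (- l / f x ^ 2) with ((0 * f x - l * 1) / (f x)²) by (unfold Rsqr; field; exact Hfx).
  intros eps Heps. destruct (Hd eps Heps) as [d Hdd]. exists d. intros h Hh0 Hh.
  specialize (Hdd h Hh0 Hh). unfold div_fct, fct_cte in Hdd.
  replace (/ f (x + h) - / f x) with (1 / f (x + h) - 1 / f x) by (unfold Rdiv; ring).
  exact Hdd.
Qed.

(** Functions given on [0, +oo) are extended to R by their value at 0, so that
    the global notions [continuity] and [RInt] of the libraries apply. *)
Definition extend0 (f : R -> R) (t : R) : R := f (Rmax 0 t).

Lemma extend0_eq f t : 0 <= t -> extend0 f t = f t.
Proof. intros Ht. unfold extend0. rewrite Rmax_right; [reflexivity|exact Ht]. Qed.

Lemma continuity_extend0 f : right_cont_at0 f ->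
  (forall t, 0 < t -> continuity_pt f t) -> continuity (extend0 f).
Proof.
  intros Hf0 Hf x. apply continuity_pt_eps. intros eps Heps.
  destruct (Rlt_or_le 0 x) as [Hx|Hx].
  - destruct (proj1 (continuity_pt_eps f x) (Hf x Hx) eps Heps) as [d [Hd Hy]].
    exists (Rmin d x). split; [apply Rmin_pos; lra|]. intros y Hyx.
    pose proof (Rmin_l d x). pose proof (Rmin_r d x).
    assert (0 < y) by (apply Rabs_def2 in Hyx; lra).
    rewrite !extend0_eq by lra. apply Hy. lra.
  - destruct (Hf0 eps Heps) as [d [Hd Hy]]. exists d. split; [exact Hd|].
    intros y Hyx. unfold extend0. rewrite (Rmax_left 0 x) by lra.
    destruct (Rle_dec y 0).
    + rewrite Rmax_left, Rminus_diag, Rabs_R0; lra.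
    + rewrite Rmax_right by lra. apply Hy. apply Rabs_def2 in Hyx. lra.
Qed.

Lemma derivable_pt_lim_extend0 f t l : 0 < t ->
  derivable_pt_lim f t l -> derivable_pt_lim (extend0 f) t l.
Proof.
  intros Ht Hf eps Heps. destruct (Hf eps Heps) as [d Hd].
  assert (Hdt : 0 < Rmin d t) by (apply Rmin_pos; [apply cond_pos|lra]).
  exists (mkposreal _ Hdt). intros h Hh0 Hh. simpl in Hh.
  pose proof (Rmin_l d t). pose proof (Rmin_r d t). pose proof (Rabs_def2 _ _ Hh).
  rewrite !extend0_eq by lra. apply Hd; [exact Hh0|lra].
Qed.

Lemma MVT_lim F F' a b : a < b ->
  (forall c, a <= c <= b -> continuity_pt F c) ->
  (forall c, a < c < b -> derivable_pt_lim F c (F' c)) ->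
  exists c, a < c < b /\ F b - F a = F' c * (b - a).
Proof.
  intros Hab HF HF'.
  assert (Hd : forall c, a < c < b -> derivable_pt F c) by (intros c Hc; exists (F' c); apply HF', Hc).
  assert (Hid : forall c, a < c < b -> derivable_pt id c) by (intros; apply derivable_pt_id).
  assert (Hcid : forall c, a <= c <= b -> continuity_pt id c)
    by (intros; apply derivable_continuous_pt, derivable_pt_id).
  destruct (MVT F id a b Hd Hid Hab HF Hcid) as [c [Hc E]].
  exists c. split; [exact Hc|].
  rewrite (derive_pt_eq_0 _ _ _ (Hd c Hc) (HF' c Hc)),
          (derive_pt_eq_0 _ _ _ (Hid c Hc) (derivable_pt_lim_id c)) in E.
  unfold id in E. lra.
Qed.

Lemma nondecreasing_on_derive_nonneg F F' a b :
  (forall c, a <= c <= b -> continuity_pt F c) ->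
  (forall c, a < c < b -> derivable_pt_lim F c (F' c) /\ 0 <= F' c) ->
  forall s t, a <= s -> s <= t -> t <= b -> F s <= F t.
Proof.
  intros HF HF' s t Has Hst Htb. destruct (Req_dec s t) as [->|Hne]; [lra|].
  destruct (MVT_lim F F' s t) as [c [Hc E]]; [lra| |intros; apply HF'; lra|].
  - intros; apply HF; lra.
  - assert (0 <= F' c) by (apply HF'; lra). nra.
Qed.

Lemma nondecreasing_derive_nonneg F F' a : continuity F ->
  (forall c, a < c -> derivable_pt_lim F c (F' c) /\ 0 <= F' c) ->
  forall s t, a <= s -> s <= t -> F s <= F t.
Proof.
  intros HF HF' s t Has Hst. apply (nondecreasing_on_derive_nonneg F F' a t); try lra.
  - intros; apply HF.
  - intros; apply HF'; lra.
Qed.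

Lemma increasing_derive_pos F F' a : continuity F ->
  (forall c, a < c -> derivable_pt_lim F c (F' c) /\ 0 < F' c) ->
  forall s t, a <= s -> s < t -> F s < F t.
Proof.
  intros HF HF' s t Has Hst.
  destruct (MVT_lim F F' s t) as [c [Hc E]]; [lra|intros; apply HF|intros; apply HF'; lra|].
  assert (0 < F' c) by (apply HF'; lra). nra.
Qed.

Lemma constant_derive_0 F : continuity F ->
  (forall c, 0 < c -> derivable_pt_lim F c 0) -> forall t, 0 <= t -> F t = F 0.
Proof.
  intros HF HF' t Ht. apply Rle_antisym.
  - assert (H : (fun x => - F x) 0 <= (fun x => - F x) t).
    { apply (nondecreasing_derive_nonneg (fun x => - F x) (fun _ => - 0) 0); try lra.
      - intro x. apply (continuity_pt_opp F), HF.
      - intros c Hc. split; [apply (derivable_pt_lim_opp F), HF', Hc|lra]. }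
    simpl in H. lra.
  - apply (nondecreasing_derive_nonneg F (fun _ => 0) 0); auto; try lra.
    intros c Hc. split; [apply HF', Hc|lra].
Qed.

Definition antideriv (k : R -> R) (t : R) : R := RInt k 0 t.

Lemma antideriv_0 k : antideriv k 0 = 0.
Proof. unfold antideriv. rewrite RInt_point. reflexivity. Qed.

Lemma derivable_pt_lim_antideriv k : continuity k ->
  forall t, derivable_pt_lim (antideriv k) t (k t).
Proof.
  intros Hk t. apply is_derive_Reals, (is_derive_RInt k (antideriv k) 0).
  - exists (mkposreal 1 Rlt_0_1). intros y _.
    refine (RInt_correct (V := R_CompleteNormedModule) k 0 y _).
    apply ex_RInt_continuous. intros z _. apply continuity_pt_filterlim, Hk.
  - apply continuity_pt_filterlim, Hk.
Qed.

Lemma continuity_antideriv k : continuity k -> continuity (antideriv k).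
Proof.
  intros Hk t. apply (continuity_pt_derivable_pt_lim _ _ (k t)).
  apply derivable_pt_lim_antideriv, Hk.
Qed.

Lemma linear_ode_exp F k K : continuity F -> continuity K ->
  (forall t, 0 < t -> derivable_pt_lim K t (k t)) ->
  (forall t, 0 < t -> derivable_pt_lim F t (k t * F t)) ->
  forall t, 0 <= t -> F t = F 0 * exp (K t - K 0).
Proof.
  intros HF HK HK' HF' t Ht.
  assert (E : F t * exp (- K t) = F 0 * exp (- K 0)).
  { apply (constant_derive_0 (fun x => F x * exp (- K x))); auto.
    - intro x. apply continuity_pt_mult; [apply HF|].
      apply continuity_exp_fun. intro y. apply (continuity_pt_opp K), HK.
    - intros c Hc.
      replace 0 with (k c * F c * exp (- K c) + F c * (exp (- K c) * - k c)) by ring.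
      apply (derivable_pt_lim_mult F (fun x => exp (- K x))); [auto|].
      apply (derivable_pt_lim_exp_fun (fun y => - K y)), (derivable_pt_lim_opp K), HK', Hc. }
  unfold Rminus. rewrite exp_plus.
  apply (f_equal (fun z => z * exp (K t))) in E.
  rewrite Rmult_assoc, <- exp_plus, Rplus_opp_l, exp_0, Rmult_1_r in E.
  rewrite E, exp_Ropp. ring.
Qed.

Lemma linear_ode_pos F k : continuity F -> continuity k -> 0 < F 0 ->
  (forall t, 0 < t -> derivable_pt_lim F t (k t * F t)) -> forall t, 0 <= t -> 0 < F t.
Proof.
  intros HF Hk HF0 HF' t Ht.
  rewrite (linear_ode_exp F k (antideriv k) HF (continuity_antideriv k Hk)
             (fun t _ => derivable_pt_lim_antideriv k Hk t) HF' t Ht).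
  apply Rmult_lt_0_compat; [exact HF0|apply exp_pos].
Qed.

(** * Inverse of an increasing time change *)

Section IncreasingInverse.

Variables (T T' : R -> R) (kap : R).
Hypothesis kap_pos : 0 < kap.
Hypothesis T_derive : forall s, derivable_pt_lim T s (T' s).
Hypothesis T'_pos : forall s, 0 < T' s.
Hypothesis T_0 : T 0 = 0.
Hypothesis T_linear_growth : forall s, 0 <= s -> s <= kap * T s.

Let continuity_T : continuity T.
Proof. intro s. apply (continuity_pt_derivable_pt_lim _ _ _ (T_derive s)). Qed.

Let T_increasing s t : s < t -> T s < T t.
Proof.
  intros Hst. apply (increasing_derive_pos T T' s); [exact continuity_T| |lra|exact Hst].
  intros c _. split; [apply T_derive|apply T'_pos].
Qed.

Lemma T_preimage t : 0 <= t -> {s | 0 <= s <= kap * t /\ T s = t}.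
Proof.
  intros Ht.
  assert (Hc : continuity (fun s => T s - t))
    by (apply continuity_minus; [exact continuity_T|apply continuity_const_fun]).
  assert (Hkt : 0 <= kap * t) by (apply Rmult_le_pos; lra).
  destruct (IVT_cor (fun s => T s - t) 0 (kap * t) Hc Hkt) as [s [Hs Es]].
  - pose proof (T_linear_growth (kap * t) Hkt). rewrite T_0.
    assert (t <= T (kap * t)) by nra. nra.
  - exists s. split; [exact Hs|lra].
Defined.

Definition Tinv (t : R) : R :=
  match Rle_lt_dec 0 t with
  | left Ht => proj1_sig (T_preimage t Ht)
  | right _ => 0
  end.

Lemma Tinv_spec t : 0 <= t -> 0 <= Tinv t <= kap * t /\ T (Tinv t) = t.
Proof.
  intros Ht. unfold Tinv. destruct (Rle_lt_dec 0 t) as [H|H]; [|exfalso; lra].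
  exact (proj2_sig (T_preimage t H)).
Qed.

Lemma Tinv_neg t : t < 0 -> Tinv t = 0.
Proof. intros Ht. unfold Tinv. destruct (Rle_lt_dec 0 t); [exfalso; lra|reflexivity]. Qed.

Lemma T_Tinv t : 0 <= t -> T (Tinv t) = t.
Proof. intros Ht. apply Tinv_spec, Ht. Qed.

Lemma Tinv_nonneg t : 0 <= Tinv t.
Proof.
  destruct (Rle_lt_dec 0 t) as [Ht|Ht]; [apply Tinv_spec, Ht|rewrite Tinv_neg; lra].
Qed.

Lemma Tinv_0 : Tinv 0 = 0.
Proof. pose proof (Tinv_spec 0 (Rle_refl 0)). lra. Qed.

Lemma Tinv_T s t : 0 <= t -> T s = t -> Tinv t = s.
Proof.
  intros Ht Hst. destruct (Rtotal_order (Tinv t) s) as [Hlt|[Heq|Hgt]]; [|exact Heq|].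
  - apply T_increasing in Hlt. rewrite T_Tinv in Hlt by exact Ht. lra.
  - apply T_increasing in Hgt. rewrite T_Tinv in Hgt by exact Ht. lra.
Qed.

Lemma Tinv_pos t : 0 < t -> 0 < Tinv t.
Proof.
  intros Ht. destruct (Req_dec (Tinv t) 0) as [E|E].
  - pose proof (T_Tinv t (Rlt_le _ _ Ht)) as HT. rewrite E, T_0 in HT. lra.
  - pose proof (Tinv_nonneg t). lra.
Qed.

Lemma Tinv_le t s : 0 <= s -> t <= T s -> Tinv t <= s.
Proof.
  intros Hs Hts. destruct (Rle_lt_dec 0 t) as [Ht|Ht].
  - destruct (Rle_lt_dec (Tinv t) s) as [Hle|Hlt]; [exact Hle|].
    apply T_increasing in Hlt. rewrite T_Tinv in Hlt by exact Ht. lra.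
  - rewrite Tinv_neg; assumption.
Qed.

Lemma continuity_Tinv : continuity Tinv.
Proof.
  intro t. destruct (Rlt_or_le 0 t) as [Ht|Ht].
  - pose proof (Tinv_nonneg t).
    apply (continuity_pt_recip_interv T Tinv 0 (Tinv t + 1)); [lra| | | | |].
    + intros x y _ Hxy _. apply T_increasing, Hxy.
    + intros x Hx _. apply T_Tinv. rewrite T_0 in Hx. exact Hx.
    + intros x Hx Hx'. rewrite T_0 in Hx. split; [apply Tinv_nonneg|apply Tinv_le; lra].
    + intros; apply continuity_T.
    + rewrite T_0. split; [exact Ht|]. rewrite <- (T_Tinv t) at 1 by lra.
      apply T_increasing. lra.
  - (* near [t <= 0], [Tinv] is squeezed between 0 and [kap * max 0 y] *)
    apply continuity_pt_eps. intros eps Heps.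
    exists (eps / kap). split; [apply Rdiv_lt_0_compat; lra|]. intros y Hy.
    assert (Htinv : Tinv t = 0)
      by (destruct (Rlt_or_le t 0); [apply Tinv_neg; lra|replace t with 0 by lra; apply Tinv_0]).
    rewrite Htinv, Rminus_0_r, Rabs_right by (apply Rle_ge, Tinv_nonneg).
    destruct (Rlt_or_le y 0) as [Hy0|Hy0]; [rewrite Tinv_neg; lra|].
    apply Rabs_def2 in Hy. pose proof (Tinv_spec y Hy0) as [[_ Hle] _].
    assert (kap * y < kap * (eps / kap)) by (apply Rmult_lt_compat_l; lra).
    replace (kap * (eps / kap)) with eps in * by (field; lra). lra.
Qed.

Lemma derivable_pt_lim_Tinv t : 0 < t -> derivable_pt_lim Tinv t (/ T' (Tinv t)).
Proof.
  intros Ht.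
  assert (HT : forall a, Tinv 0 <= a <= Tinv (t + 1) -> derivable_pt T a)
    by (intros a _; exists (T' a); apply T_derive).
  assert (Hmid : Tinv 0 <= Tinv t <= Tinv (t + 1)).
  { rewrite Tinv_0. split; [apply Tinv_nonneg|].
    apply Tinv_le; [apply Tinv_nonneg|]. rewrite T_Tinv; lra. }
  pose proof (derivable_pt_lim_recip_interv T Tinv 0 (t + 1) t HT (continuity_Tinv t)
                ltac:(lra) ltac:(lra) Hmid) as H.
  rewrite (derive_pt_eq_0 _ _ _ (HT (Tinv t) Hmid) (T_derive (Tinv t))) in H.
  replace (/ T' (Tinv t)) with (1 / T' (Tinv t)) by (unfold Rdiv; ring).
  apply H.
  - intros x Hx. unfold comp, id. apply T_Tinv. lra.
  - apply Rgt_not_eq, T'_pos.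
Qed.

Lemma is_lim_Tinv : is_lim Tinv p_infty p_infty.
Proof.
  apply is_lim_spec. unfold is_lim'. intros M. exists (Rmax 0 (T M)). intros t Ht.
  pose proof (Rmax_l 0 (T M)). pose proof (Rmax_r 0 (T M)).
  destruct (Rlt_or_le M (Tinv t)) as [HM|HM]; [exact HM|].
  assert (HTM : T (Tinv t) <= T M).
  { destruct (Req_dec (Tinv t) M) as [->|Hne]; [lra|apply Rlt_le, T_increasing; lra]. }
  rewrite T_Tinv in HTM by lra. lra.
Qed.

End IncreasingInverse.

(** * Uniqueness for planar systems *)

Definition box_lipschitz (m M : R) (f : R -> R -> R) : Prop :=
  exists K Mf, forall x y x' y', m <= x <= M -> m <= y <= M -> m <= x' <= M -> m <= y' <= M ->
    Rabs (f x y) <= Mf /\ Rabs (f x y - f x' y') <= K * (Rabs (x - x') + Rabs (y - y')).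

Section BoxLipschitz.

Variables m M : R.
Hypothesis m_pos : 0 < m.

Lemma box_lipschitz_const a : box_lipschitz m M (fun _ _ => a).
Proof.
  exists 0, (Rabs a). intros x y x' y' _ _ _ _. split; [lra|].
  rewrite Rminus_diag, Rabs_R0, Rmult_0_l. lra.
Qed.

Lemma box_lipschitz_fst : box_lipschitz m M (fun x _ => x).
Proof.
  exists 1, M. intros x y x' y' Hx _ _ _. split; [rewrite Rabs_right; lra|].
  pose proof (Rabs_pos (y - y')). lra.
Qed.

Lemma box_lipschitz_snd : box_lipschitz m M (fun _ y => y).
Proof.
  exists 1, M. intros x y x' y' _ Hy _ _. split; [rewrite Rabs_right; lra|].
  pose proof (Rabs_pos (x - x')). lra.
Qed.

Lemma box_lipschitz_plus f g : box_lipschitz m M f -> box_lipschitz m M g ->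
  box_lipschitz m M (fun x y => f x y + g x y).
Proof.
  intros [K1 [M1 H1]] [K2 [M2 H2]]. exists (K1 + K2), (M1 + M2).
  intros x y x' y' Hx Hy Hx' Hy'.
  destruct (H1 x y x' y' Hx Hy Hx' Hy') as [A1 B1], (H2 x y x' y' Hx Hy Hx' Hy') as [A2 B2].
  split.
  - eapply Rle_trans; [apply Rabs_triang|lra].
  - replace (f x y + g x y - (f x' y' + g x' y')) with ((f x y - f x' y') + (g x y - g x' y'))
      by ring.
    eapply Rle_trans; [apply Rabs_triang|lra].
Qed.

Lemma box_lipschitz_opp f : box_lipschitz m M f -> box_lipschitz m M (fun x y => - f x y).
Proof.
  intros [K [Mf H]]. exists K, Mf. intros x y x' y' Hx Hy Hx' Hy'.
  replace (- f x y - - f x' y') with (- (f x y - f x' y')) by ring.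
  rewrite !Rabs_Ropp. apply H; assumption.
Qed.

Lemma box_lipschitz_minus f g : box_lipschitz m M f -> box_lipschitz m M g ->
  box_lipschitz m M (fun x y => f x y - g x y).
Proof. intros Hf Hg. apply box_lipschitz_plus, box_lipschitz_opp; assumption. Qed.

Lemma box_lipschitz_mult f g : box_lipschitz m M f -> box_lipschitz m M g ->
  box_lipschitz m M (fun x y => f x y * g x y).
Proof.
  intros [K1 [M1 H1]] [K2 [M2 H2]]. exists (Rabs M1 * K2 + Rabs M2 * K1), (M1 * M2).
  intros x y x' y' Hx Hy Hx' Hy'.
  destruct (H1 x y x' y' Hx Hy Hx' Hy') as [A1 B1], (H2 x y x' y' Hx Hy Hx' Hy') as [A2 B2].
  destruct (H2 x' y' x' y' Hx' Hy' Hx' Hy') as [A2' _].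
  pose proof (Rabs_pos (f x y)). pose proof (Rabs_pos (g x y)). pose proof (Rabs_pos (g x' y')).
  pose proof (Rabs_pos (f x y - f x' y')). pose proof (Rabs_pos (g x y - g x' y')).
  pose proof (Rabs_pos (x - x')). pose proof (Rabs_pos (y - y')).
  pose proof (RRle_abs M1). pose proof (RRle_abs M2).
  split; [rewrite Rabs_mult; apply Rmult_le_compat; assumption|].
  replace (f x y * g x y - f x' y' * g x' y')
    with (f x y * (g x y - g x' y') + g x' y' * (f x y - f x' y')) by ring.
  eapply Rle_trans; [apply Rabs_triang|]. rewrite !Rabs_mult.
  assert (Rabs (f x y) * Rabs (g x y - g x' y') <= Rabs M1 * (K2 * (Rabs (x - x') + Rabs (y - y'))))
    by (apply Rmult_le_compat; lra).
  assert (Rabs (g x' y') * Rabs (f x y - f x' y') <= Rabs M2 * (K1 * (Rabs (x - x') + Rabs (y - y'))))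
    by (apply Rmult_le_compat; lra).
  lra.
Qed.

Lemma box_lipschitz_pow f n : box_lipschitz m M f -> box_lipschitz m M (fun x y => f x y ^ n).
Proof.
  intros Hf. induction n as [|n IH]; simpl.
  - apply box_lipschitz_const.
  - apply box_lipschitz_mult; assumption.
Qed.

Lemma box_lipschitz_inv_mult : box_lipschitz m M (fun x y => / (x * y)).
Proof.
  exists (M / m ^ 4 * 2), (/ (m * m)). intros x y x' y' Hx Hy Hx' Hy'.
  assert (m * m <= x * y) by nra. assert (m * m <= x' * y') by nra.
  assert (Hm4 : m * m * (m * m) <= x * y * (x' * y')) by (apply Rmult_le_compat; nra).
  assert (0 < m * m * (m * m)) by (apply Rmult_lt_0_compat; nra).
  split.
  - rewrite Rabs_right by (apply Rle_ge, Rlt_le, Rinv_0_lt_compat; nra).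
    apply Rinv_le_contravar; nra.
  - replace (/ (x * y) - / (x' * y')) with ((x' * y' - x * y) / (x * y * (x' * y')))
      by (field; split; nra).
    unfold Rdiv. rewrite Rabs_mult, (Rabs_right (/ _)) by (apply Rle_ge, Rlt_le, Rinv_0_lt_compat; nra).
    replace (x' * y' - x * y) with (- (y * (x - x') + x' * (y - y'))) by ring.
    rewrite Rabs_Ropp.
    pose proof (Rabs_pos (x - x')). pose proof (Rabs_pos (y - y')).
    assert (Hnum : Rabs (y * (x - x') + x' * (y - y')) <= M * (Rabs (x - x') + Rabs (y - y'))).
    { eapply Rle_trans; [apply Rabs_triang|].
      rewrite !Rabs_mult, (Rabs_right y), (Rabs_right x') by lra. nra. }
    assert (Hden : / (x * y * (x' * y')) <= / m ^ 4).
    { apply Rinv_le_contravar; [nra|]. replace (m ^ 4) with (m * m * (m * m)) by ring. exact Hm4. }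
    assert (0 < / (x * y * (x' * y'))) by (apply Rinv_0_lt_compat; nra).
    assert (0 < / m ^ 4) by (apply Rinv_0_lt_compat, pow_lt, m_pos).
    pose proof (Rabs_pos (y * (x - x') + x' * (y - y'))).
    apply Rle_trans with (M * (Rabs (x - x') + Rabs (y - y')) * / m ^ 4).
    + apply Rmult_le_compat; lra.
    + unfold Rdiv. nra.
Qed.

End BoxLipschitz.

Ltac box_lipschitz_tac :=
  repeat first [ apply box_lipschitz_plus | apply box_lipschitz_minus | apply box_lipschitz_opp
               | apply box_lipschitz_mult | apply box_lipschitz_pow
               | apply box_lipschitz_const
               | apply box_lipschitz_inv_mult; assumption
               | apply box_lipschitz_fst; assumption | apply box_lipschitz_snd; assumption ].

Lemma continuous_pos_bounds f T : 0 <= T -> continuity f ->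
  (forall t, 0 <= t <= T -> 0 < f t) ->
  exists m M, 0 < m /\ forall t, 0 <= t <= T -> m <= f t <= M.
Proof.
  intros HT Hf Hpos.
  destruct (continuity_ab_min f 0 T HT (fun c _ => Hf c)) as [p [Hp1 Hp2]].
  destruct (continuity_ab_maj f 0 T HT (fun c _ => Hf c)) as [q [Hq1 Hq2]].
  exists (f p), (f q). split; [apply Hpos, Hp2|]. intros t Ht. split; auto.
Qed.

Lemma continuous_pos_bounds2 f g T : 0 <= T -> continuity f -> continuity g ->
  (forall t, 0 <= t <= T -> 0 < f t /\ 0 < g t) ->
  exists m M, 0 < m /\ forall t, 0 <= t <= T -> m <= f t <= M /\ m <= g t <= M.
Proof.
  intros HT Hf Hg Hpos.
  destruct (continuous_pos_bounds f T HT Hf) as [m1 [M1 [Hm1 B1]]]; [intros; apply Hpos; lra|].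
  destruct (continuous_pos_bounds g T HT Hg) as [m2 [M2 [Hm2 B2]]]; [intros; apply Hpos; lra|].
  exists (Rmin m1 m2), (Rmax M1 M2). split; [apply Rmin_pos; assumption|].
  intros t Ht. specialize (B1 t Ht). specialize (B2 t Ht).
  pose proof (Rmin_l m1 m2). pose proof (Rmin_r m1 m2).
  pose proof (Rmax_l M1 M2). pose proof (Rmax_r M1 M2). lra.
Qed.

Lemma continuous_pos_box y1 y2 z1 z2 T : 0 <= T ->
  continuity y1 -> continuity y2 -> continuity z1 -> continuity z2 ->
  (forall t, 0 <= t <= T -> 0 < y1 t /\ 0 < y2 t /\ 0 < z1 t /\ 0 < z2 t) ->
  exists m M, 0 < m /\ forall t, 0 <= t <= T ->
    (m <= y1 t <= M /\ m <= y2 t <= M) /\ (m <= z1 t <= M /\ m <= z2 t <= M).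
Proof.
  intros HT Hy1 Hy2 Hz1 Hz2 Hpos.
  destruct (continuous_pos_bounds2 y1 y2 T HT Hy1 Hy2) as [m1 [M1 [Hm1 By]]];
    [intros t Ht; split; apply Hpos; lra|].
  destruct (continuous_pos_bounds2 z1 z2 T HT Hz1 Hz2) as [m2 [M2 [Hm2 Bz]]];
    [intros t Ht; split; apply Hpos; lra|].
  exists (Rmin m1 m2), (Rmax M1 M2). split; [apply Rmin_pos; assumption|].
  intros t Ht. specialize (By t Ht). specialize (Bz t Ht).
  pose proof (Rmin_l m1 m2). pose proof (Rmin_r m1 m2).
  pose proof (Rmax_l M1 M2). pose proof (Rmax_r M1 M2). lra.
Qed.

Lemma gronwall_vanishing E E' c T : 0 <= T ->
  (forall x, 0 <= x <= T -> continuity_pt E x) ->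
  (forall x, 0 < x < T -> derivable_pt_lim E x (E' x) /\ E' x <= c * E x) ->
  E 0 = 0 -> E T <= 0.
Proof.
  intros HT HE HE' HE0.
  assert (Hmono : - (E 0 * exp (- c * 0)) <= - (E T * exp (- c * T))).
  { apply (nondecreasing_on_derive_nonneg (fun x => - (E x * exp (- c * x)))
             (fun x => - ((E' x - c * E x) * exp (- c * x))) 0 T); try lra.
    - intros x Hx. apply continuity_pt_opp, continuity_pt_mult; [apply HE, Hx|].
      apply continuity_exp_fun, continuity_mult; [apply continuity_const_fun|apply derivable_continuous, derivable_id].
    - intros x Hx. destruct (HE' x Hx) as [HdE Hle]. split.
      + apply (derivable_pt_lim_opp (fun x => E x * exp (- c * x))).
        replace ((E' x - c * E x) * exp (- c * x))
          with (E' x * exp (- c * x) + E x * (exp (- c * x) * (- c * 1))) by ring.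
        apply (derivable_pt_lim_mult E (fun x => exp (- c * x))); [exact HdE|].
        apply (derivable_pt_lim_exp_fun (fun x => - c * x)), derivable_pt_lim_scal,
          derivable_pt_lim_id.
      + pose proof (exp_pos (- c * x)). nra. }
  rewrite HE0 in Hmono. pose proof (exp_pos (- c * T)). nra.
Qed.

(** With [u], [v] the differences of two solutions and [d1], [d2] those of the vector
    fields, this bounds the derivative of [u^2 + v^2] by a multiple of itself. *)
Lemma energy_derivative_bound k u v d1 d2 kap K :
  Rabs k <= kap -> 0 <= K ->
  Rabs d1 <= K * (Rabs u + Rabs v) -> Rabs d2 <= K * (Rabs u + Rabs v) ->
  2 * u * (k * d1) + 2 * v * (k * d2) <= 4 * kap * K * (u ^ 2 + v ^ 2).
Proof.
  intros Hk HK H1 H2.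
  replace (2 * u * (k * d1) + 2 * v * (k * d2)) with (2 * k * (u * d1 + v * d2)) by ring.
  apply Rle_trans with (Rabs (2 * k * (u * d1 + v * d2))); [apply RRle_abs|].
  rewrite !Rabs_mult, (Rabs_right 2) by lra.
  pose proof (Rabs_pos u). pose proof (Rabs_pos v). pose proof (Rabs_pos d1).
  pose proof (Rabs_pos d2). pose proof (Rabs_pos k).
  assert (Huv : Rabs (u * d1 + v * d2) <= K * (Rabs u + Rabs v) ^ 2).
  { eapply Rle_trans; [apply Rabs_triang|]. rewrite !Rabs_mult.
    assert (Rabs u * Rabs d1 <= Rabs u * (K * (Rabs u + Rabs v))) by (apply Rmult_le_compat_l; lra).
    assert (Rabs v * Rabs d2 <= Rabs v * (K * (Rabs u + Rabs v))) by (apply Rmult_le_compat_l; lra).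
    nra. }
  assert (Hsq : (Rabs u + Rabs v) ^ 2 <= 2 * (u ^ 2 + v ^ 2)).
  { rewrite <- (pow2_abs u), <- (pow2_abs v). pose proof (pow2_ge_0 (Rabs u - Rabs v)). nra. }
  pose proof (Rabs_pos (u * d1 + v * d2)).
  assert (Rabs k * Rabs (u * d1 + v * d2) <= kap * (2 * K * (u ^ 2 + v ^ 2)))
    by (apply Rmult_le_compat; nra).
  nra.
Qed.

Lemma planar_ode_uniqueness (F G : R -> R -> R) (k y1 y2 z1 z2 : R -> R) :
  (forall m M, 0 < m -> box_lipschitz m M F) -> (forall m M, 0 < m -> box_lipschitz m M G) ->
  continuity k -> continuity y1 -> continuity y2 -> continuity z1 -> continuity z2 ->
  (forall t, 0 <= t -> 0 < y1 t /\ 0 < y2 t /\ 0 < z1 t /\ 0 < z2 t) ->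
  y1 0 = z1 0 -> y2 0 = z2 0 ->
  (forall t, 0 < t ->
     derivable_pt_lim y1 t (k t * F (y1 t) (y2 t)) /\ derivable_pt_lim y2 t (k t * G (y1 t) (y2 t)) /\
     derivable_pt_lim z1 t (k t * F (z1 t) (z2 t)) /\ derivable_pt_lim z2 t (k t * G (z1 t) (z2 t))) ->
  forall t, 0 <= t -> y1 t = z1 t /\ y2 t = z2 t.
Proof.
  intros HF HG Hk Hy1 Hy2 Hz1 Hz2 Hpos H10 H20 Hd T HT.
  destruct (continuous_pos_box y1 y2 z1 z2 T HT Hy1 Hy2 Hz1 Hz2) as [m [M [Hm Hbox]]];
    [intros t Ht; apply Hpos; lra|].
  destruct (continuity_ab_maj (fun x => Rabs (k x)) 0 T HT) as [p [Hk_max _]].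
  { intros x _. apply (continuity_pt_comp k Rabs); [apply Hk|apply Rcontinuity_abs]. }
  set (kap := Rabs (k p)).
  destruct (HF m M Hm) as [K1 [MF LF]]. destruct (HG m M Hm) as [K2 [MG LG]].
  set (K := Rabs K1 + Rabs K2).
  set (E := fun x => (y1 x - z1 x) ^ 2 + (y2 x - z2 x) ^ 2).
  assert (HET : E T <= 0).
  { apply (gronwall_vanishing E
             (fun x => 2 * (y1 x - z1 x) * (k x * F (y1 x) (y2 x) - k x * F (z1 x) (z2 x))
                     + 2 * (y2 x - z2 x) * (k x * G (y1 x) (y2 x) - k x * G (z1 x) (z2 x)))
             (4 * kap * K) T HT).
    - intros x _. unfold E. apply continuity_plus; apply continuity_pow_fun, continuity_minus; assumption.
    - intros x Hx. destruct (Hd x ltac:(lra)) as [D1 [D2 [D3 D4]]]. split.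
      + apply (derivable_pt_lim_plus (fun x => (y1 x - z1 x) ^ 2) (fun x => (y2 x - z2 x) ^ 2)).
        * apply (derivable_pt_lim_sqr_fun (fun x => y1 x - z1 x)), derivable_pt_lim_minus; assumption.
        * apply (derivable_pt_lim_sqr_fun (fun x => y2 x - z2 x)), derivable_pt_lim_minus; assumption.
      + destruct (Hbox x ltac:(lra)) as [[I1 I2] [I3 I4]].
        destruct (LF _ _ _ _ I1 I2 I3 I4) as [_ LFx]. destruct (LG _ _ _ _ I1 I2 I3 I4) as [_ LGx].
        pose proof (Rabs_pos K1). pose proof (Rabs_pos K2). pose proof (RRle_abs K1). pose proof (RRle_abs K2).
        pose proof (Rabs_pos (y1 x - z1 x)). pose proof (Rabs_pos (y2 x - z2 x)).
        rewrite <- !Rmult_minus_distr_l.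
        apply energy_derivative_bound; [apply Hk_max; lra|unfold K; lra|unfold K; nra|unfold K; nra].
    - unfold E. rewrite H10, H20, !Rminus_diag. ring. }
  unfold E in HET. pose proof (pow2_ge_0 (y1 T - z1 T)). pose proof (pow2_ge_0 (y2 T - z2 T)).
  split; nra.
Qed.

(** * Limits at infinity *)

Lemma tends_to_at_infty_is_lim f (l : R) : tends_to_at_infty f l <-> is_lim f p_infty l.
Proof.
  rewrite <- is_lim_spec. simpl. split.
  - intros H eps. destruct (H eps (cond_pos eps)) as [T HT]. exists T. intros x Hx. apply HT; lra.
  - intros H eps Heps. destruct (H (mkposreal eps Heps)) as [T HT].
    exists (T + 1). intros x Hx. apply HT; lra.
Qed.

Lemma tends_to_infty_is_lim f : tends_to_infty f <-> is_lim f p_infty p_infty.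
Proof.
  rewrite <- is_lim_spec. simpl. split.
  - intros H M. destruct (H M) as [T HT]. exists T. intros x Hx. apply HT; lra.
  - intros H M. destruct (H M) as [T HT]. exists (T + 1). intros x Hx. apply HT; lra.
Qed.

Lemma is_lim_ext_nonneg f g (l : Rbar) : (forall t, 0 <= t -> f t = g t) ->
  is_lim f p_infty l -> is_lim g p_infty l.
Proof. intros E. apply is_lim_ext_loc. exists 0. intros; apply E; lra. Qed.

Lemma is_lim_comp_p_infty f sg (l : Rbar) : is_lim f p_infty l -> is_lim sg p_infty p_infty ->
  is_lim (fun t => f (sg t)) p_infty l.
Proof. intros Hf Hsg. apply (is_lim_comp f sg p_infty l p_infty Hf Hsg). exists 0. discriminate. Qed.

Lemma is_lim_mult_fin f g (a b : R) : is_lim f p_infty a -> is_lim g p_infty b ->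
  is_lim (fun x => f x * g x) p_infty (a * b).
Proof. intros Hf Hg. exact (is_lim_mult f g p_infty a b Hf Hg I). Qed.

Lemma is_lim_inv_fin f (a : R) : a <> 0 -> is_lim f p_infty a -> is_lim (fun x => / f x) p_infty (/ a).
Proof. intros Ha Hf. apply (is_lim_inv f p_infty a Hf). intros E. apply Ha. injection E. easy. Qed.

Lemma is_lim_pow_fin f (a : R) n : is_lim f p_infty a -> is_lim (fun x => f x ^ n) p_infty (a ^ n).
Proof.
  intros Hf. induction n as [|n IH]; simpl; [apply is_lim_const|apply is_lim_mult_fin; assumption].
Qed.

Lemma is_lim_pp f g h (a b c : R) :
  is_lim f p_infty a -> is_lim g p_infty b -> is_lim h p_infty c ->
  is_lim (fun x => pp (f x) (g x) (h x)) p_infty (pp a b c).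
Proof.
  intros Hf Hg Hh. unfold pp.
  repeat match goal with
  | |- is_lim (fun x => @?u x - @?v x) _ (Finite (?a - ?b)) => apply (is_lim_minus' u v p_infty a b)
  | |- is_lim (fun x => @?u x + @?v x) _ (Finite (?a + ?b)) => apply (is_lim_plus' u v p_infty a b)
  | |- is_lim (fun x => @?u x * @?v x) _ (Finite (?a * ?b)) => apply (is_lim_mult_fin u v a b)
  | |- is_lim (fun x => @?u x ^ ?n) _ (Finite (?a ^ ?n)) => apply (is_lim_pow_fin u a n)
  | |- is_lim (fun x => - @?u x) _ (Finite (- ?a)) => apply (is_lim_opp u p_infty a)
  | |- is_lim (fun _ => ?a) _ (Finite ?a) => apply is_lim_const
  end; assumption.
Qed.

Lemma is_lim_mult_pos_p_infty f g (l : R) : 0 < l ->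
  is_lim f p_infty l -> is_lim g p_infty p_infty -> is_lim (fun x => f x * g x) p_infty p_infty.
Proof.
  intros Hl Hf Hg.
  assert (Hm : is_Rbar_mult l p_infty p_infty)
    by (apply is_Rbar_mult_sym, is_Rbar_mult_p_infty_pos; exact Hl).
  rewrite <- (is_Rbar_mult_unique _ _ _ Hm) at 2.
  exact (is_lim_mult f g p_infty l p_infty Hf Hg (Rbar_mult_correct' _ _ _ Hm)).
Qed.

Lemma is_lim_exp_scal_p_infty f (a : R) : 0 < a -> is_lim f p_infty p_infty ->
  is_lim (fun x => exp (a * f x)) p_infty p_infty.
Proof.
  intros Ha Hf. apply (is_lim_comp_p_infty exp); [exact is_lim_exp_p|].
  apply (is_lim_mult_pos_p_infty (fun _ => a) f a Ha (is_lim_const a p_infty) Hf).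
Qed.

Lemma derive_lim_pos_p_infty (F f : R -> R) (l : R) : continuity F ->
  (forall x, derivable_pt_lim F x (f x)) -> is_lim f p_infty l -> 0 < l ->
  is_lim F p_infty p_infty.
Proof.
  intros HF HF' Hf Hl. apply is_lim_spec in Hf. unfold is_lim' in Hf.
  assert (Hl2 : 0 < l / 2) by lra.
  destruct (Hf (mkposreal (l / 2) Hl2)) as [S HS]. simpl in HS.
  assert (Hlow : forall t, S + 1 <= t -> F (S + 1) + l / 2 * (t - (S + 1)) <= F t).
  { intros t Ht.
    assert (H : F (S + 1) - l / 2 * (S + 1) <= F t - l / 2 * t).
    { apply (nondecreasing_derive_nonneg (fun x => F x - l / 2 * x) (fun x => f x - l / 2 * 1) (S + 1));
        try lra.
      - intro x. apply continuity_pt_minus; [apply HF|apply continuity_pt_scal, derivable_continuous_pt, derivable_pt_id].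
      - intros x Hx. split.
        + apply (derivable_pt_lim_minus F (fun x => l / 2 * x)); [apply HF'|].
          apply derivable_pt_lim_scal, derivable_pt_lim_id.
        + assert (HSx : Rabs (f x - l) < l / 2) by (apply HS; lra).
          apply Rabs_def2 in HSx. lra. }
    lra. }
  apply is_lim_spec. unfold is_lim'. intros M.
  exists (S + 1 + Rabs (M - F (S + 1)) * 2 / l). intros x Hx.
  pose proof (Rabs_pos (M - F (S + 1))). pose proof (RRle_abs (M - F (S + 1))).
  assert (0 <= Rabs (M - F (S + 1)) * 2 / l) by (apply Rdiv_le_0_compat; lra).
  specialize (Hlow x ltac:(lra)).
  assert (l / 2 * (x - (S + 1)) > l / 2 * (Rabs (M - F (S + 1)) * 2 / l))
    by (apply Rmult_gt_compat_l; lra).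
  replace (l / 2 * (Rabs (M - F (S + 1)) * 2 / l)) with (Rabs (M - F (S + 1))) in * by (field; lra).
  lra.
Qed.

(** * The polynomials [pp], [qq], [rr] *)

(** [pp] is Schur's polynomial of degree 4. *)
Lemma pp_schur x y z :
  pp x y z = x ^ 2 * (x - y) * (x - z) + y ^ 2 * (y - x) * (y - z) + z ^ 2 * (z - x) * (z - y).
Proof. unfold pp. ring. Qed.

Lemma schur_sorted_nonneg x y z : 0 <= z -> z <= y -> y <= x ->
  0 <= x ^ 2 * (x - y) * (x - z) + y ^ 2 * (y - x) * (y - z) + z ^ 2 * (z - x) * (z - y).
Proof.
  intros Hz Hzy Hyx.
  assert (Hxy : 0 <= (x - y) * (x ^ 2 * (x - z) - y ^ 2 * (y - z)))
    by (apply Rmult_le_pos; [lra|]; assert (y ^ 2 <= x ^ 2) by nra; nra).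
  assert (0 <= z ^ 2 * (x - z) * (y - z)) by (apply Rmult_le_pos; [apply Rmult_le_pos|]; nra).
  nra.
Qed.

Lemma pp_nonneg x y z : 0 <= x -> 0 <= y -> 0 <= z -> 0 <= pp x y z.
Proof.
  intros Hx Hy Hz. rewrite pp_schur.
  destruct (Rle_dec x y), (Rle_dec y z), (Rle_dec x z);
    first [ pose proof (schur_sorted_nonneg x y z ltac:(lra) ltac:(lra) ltac:(lra))
          | pose proof (schur_sorted_nonneg x z y ltac:(lra) ltac:(lra) ltac:(lra))
          | pose proof (schur_sorted_nonneg y x z ltac:(lra) ltac:(lra) ltac:(lra))
          | pose proof (schur_sorted_nonneg y z x ltac:(lra) ltac:(lra) ltac:(lra))
          | pose proof (schur_sorted_nonneg z x y ltac:(lra) ltac:(lra) ltac:(lra))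
          | pose proof (schur_sorted_nonneg z y x ltac:(lra) ltac:(lra) ltac:(lra)) ];
    lra.
Qed.

Lemma pp_cyclic x y z : pp x y z = pp y z x.
Proof. unfold pp. ring. Qed.

Lemma pp_homogeneous x y z s : s <> 0 -> pp (x / s) (y / s) (z / s) = pp x y z / s ^ 4.
Proof. intros Hs. unfold pp. field. exact Hs. Qed.

Lemma qq_homogeneous x y z s : s <> 0 -> qq (x / s) (y / s) (z / s) = qq x y z / s ^ 4.
Proof. intros Hs. unfold qq. field. exact Hs. Qed.

Lemma rr_swap_last x y z : rr x y z = rr x z y.
Proof. unfold rr, pp, qq. field. Qed.

(** Product conservation under (S3). *)
Lemma pp_qq_cyclic_sum x y z : pp x y z + qq x y z + qq y z x + qq z x y = 0.
Proof. unfold pp, qq. ring. Qed.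

Lemma rr_cyclic_sum x y z : rr x y z + rr y z x + rr z x y = 0.
Proof. unfold rr, pp, qq. field. Qed.

Definition rhs_b (D y z : R) : R := - (2/3) * rr y (D / (y * z)) z * y.
Definition rhs_c (D y z : R) : R := - (2/3) * rr z (D / (y * z)) y * z.

Lemma box_lipschitz_rhs_b m M D : 0 < m -> box_lipschitz m M (rhs_b D).
Proof. intros Hm. unfold rhs_b, rr, pp, qq, Rdiv. box_lipschitz_tac. Qed.

Lemma box_lipschitz_rhs_c m M D : 0 < m -> box_lipschitz m M (rhs_c D).
Proof. intros Hm. unfold rhs_c, rr, pp, qq, Rdiv. box_lipschitz_tac. Qed.

Lemma rescaled_rhs_b beta w G1 G2 G3 : 0 < w -> 0 < G2 -> 0 < G3 ->
  - (1/3) * (beta * pp G1 G2 G3 * (w ^ 3) ^ 2) * w * G2 + w * (- beta * qq G2 G3 G1 * (w ^ 3) ^ 2 * G2)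
  = beta * w ^ 2 * rhs_b (w ^ 3 * G1 * G2 * G3) (w * G2) (w * G3).
Proof.
  intros Hw H2 H3. unfold rhs_b.
  replace (w ^ 3 * G1 * G2 * G3 / (w * G2 * (w * G3))) with (w * G1) by (field; lra).
  unfold rr, pp, qq. field.
Qed.

Lemma rescaled_rhs_c beta w G1 G2 G3 : 0 < w -> 0 < G2 -> 0 < G3 ->
  - (1/3) * (beta * pp G1 G2 G3 * (w ^ 3) ^ 2) * w * G3 + w * (- beta * qq G3 G1 G2 * (w ^ 3) ^ 2 * G3)
  = beta * w ^ 2 * rhs_c (w ^ 3 * G1 * G2 * G3) (w * G2) (w * G3).
Proof.
  intros Hw H2 H3. unfold rhs_c.
  replace (w ^ 3 * G1 * G2 * G3 / (w * G2 * (w * G3))) with (w * G1) by (field; lra).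
  unfold rr, pp, qq. field.
Qed.

(** * From (P) to (S3) and back *)

Lemma Rpower_third_cube x : 0 < x -> Rpower x (1/3) ^ 3 = x.
Proof.
  intros Hx. rewrite <- Rpower_pow by apply exp_pos.
  rewrite Rpower_mult. simpl INR. replace (1/3 * (1 + 1 + 1)) with 1 by field.
  apply Rpower_1, Hx.
Qed.

Section BachFlow.

Variables h0 h1 h2 h3 : R.
Hypotheses (h0_pos : 0 < h0) (h1_pos : 0 < h1) (h2_pos : 0 < h2) (h3_pos : 0 < h3).

Definition deth := h0 * h1 * h2 * h3.
Definition beta := 1 / (6 * deth ^ 2).
Definition w0 := Rpower h0 (1/3).
Definition L := Rpower (4 * deth) (1/3).

Variables b c : R -> R.
Hypothesis b_c_solve_P : P_global_solution deth (w0 * h2) (w0 * h3) b c.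

Lemma deth_pos : 0 < deth.
Proof. unfold deth. repeat apply Rmult_lt_0_compat; assumption. Qed.

Lemma beta_pos : 0 < beta.
Proof.
  unfold beta. pose proof deth_pos.
  apply Rdiv_lt_0_compat; [lra|apply Rmult_lt_0_compat; [lra|apply pow_lt; lra]].
Qed.

Lemma w0_pos : 0 < w0.
Proof. apply exp_pos. Qed.

Lemma w0_cube : w0 ^ 3 = h0.
Proof. apply Rpower_third_cube, h0_pos. Qed.

Lemma L_pos : 0 < L.
Proof. apply exp_pos. Qed.

Definition B := extend0 b.
Definition C := extend0 c.
Definition A (s : R) := deth / (B s * C s).
Definition Pi (s : R) := pp (A s) (B s) (C s).
Definition Phi := antideriv Pi.

Lemma B_C_pos s : 0 < B s /\ 0 < C s.
Proof. destruct b_c_solve_P as [_ [_ [_ [_ [Hpos _]]]]]. apply Hpos, Rmax_l. Qed.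

Lemma B_0 : B 0 = w0 * h2.
Proof. unfold B. rewrite extend0_eq by lra. apply b_c_solve_P. Qed.

Lemma C_0 : C 0 = w0 * h3.
Proof. unfold C. rewrite extend0_eq by lra. apply b_c_solve_P. Qed.

Lemma derivable_B_C s : 0 < s ->
  derivable_pt_lim B s (rhs_b deth (B s) (C s)) /\ derivable_pt_lim C s (rhs_c deth (B s) (C s)).
Proof.
  intros Hs. destruct b_c_solve_P as [_ [_ [_ [_ [_ Hd]]]]]. destruct (Hd s Hs) as [Hb Hc].
  unfold B, C, rhs_b, rhs_c. rewrite !extend0_eq by lra.
  split; apply derivable_pt_lim_extend0; assumption.
Qed.

Lemma continuity_B_C : continuity B /\ continuity C.
Proof.
  destruct b_c_solve_P as [_ [_ [Hb0 [Hc0 [_ Hd]]]]].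
  split; (apply continuity_extend0; [assumption|]); intros s Hs.
  - exact (continuity_pt_derivable_pt_lim _ _ _ (proj1 (Hd s Hs))).
  - exact (continuity_pt_derivable_pt_lim _ _ _ (proj2 (Hd s Hs))).
Qed.

Lemma A_pos s : 0 < A s.
Proof.
  destruct (B_C_pos s). pose proof deth_pos.
  apply Rdiv_lt_0_compat; [assumption|apply Rmult_lt_0_compat; assumption].
Qed.

Lemma continuity_A : continuity A.
Proof.
  destruct continuity_B_C as [HB HC]. intro s. apply continuity_pt_div.
  - apply continuity_const_fun.
  - apply continuity_pt_mult; [apply HB|apply HC].
  - destruct (B_C_pos s). apply Rgt_not_eq, Rmult_lt_0_compat; assumption.
Qed.

Lemma derivable_A_B_C s : 0 < s ->
  derivable_pt_lim A s (- (2/3) * rr (A s) (B s) (C s) * A s) /\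
  derivable_pt_lim B s (- (2/3) * rr (B s) (C s) (A s) * B s) /\
  derivable_pt_lim C s (- (2/3) * rr (C s) (A s) (B s) * C s).
Proof.
  intros Hs. destruct (derivable_B_C s Hs) as [HB HC]. destruct (B_C_pos s) as [PB PC].
  unfold rhs_b, rhs_c in HB, HC. fold (A s) in HB, HC. rewrite rr_swap_last in HB.
  split; [|split; assumption].
  replace (- (2/3) * rr (A s) (B s) (C s) * A s)
    with (deth * (- (- (2/3) * rr (B s) (C s) (A s) * B s * C s
                     + B s * (- (2/3) * rr (C s) (A s) (B s) * C s)) / (B s * C s) ^ 2)).
  - apply derivable_pt_lim_scal, (derivable_pt_lim_inv_fun (fun s => B s * C s)).
    + apply Rgt_not_eq, Rmult_lt_0_compat; assumption.
    + apply derivable_pt_lim_mult; assumption.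
  - pose proof (rr_cyclic_sum (A s) (B s) (C s)).
    replace (rr (A s) (B s) (C s)) with (- rr (B s) (C s) (A s) - rr (C s) (A s) (B s)) by lra.
    unfold A. field. split; lra.
Qed.

Lemma continuity_Pi : continuity Pi.
Proof.
  pose proof continuity_A. destruct continuity_B_C.
  unfold Pi, pp. continuity_tac.
Qed.

Lemma Pi_nonneg s : 0 <= Pi s.
Proof. destruct (B_C_pos s). pose proof (A_pos s). apply pp_nonneg; lra. Qed.

Lemma derivable_Phi s : derivable_pt_lim Phi s (Pi s).
Proof. apply derivable_pt_lim_antideriv, continuity_Pi. Qed.

Lemma continuity_Phi : continuity Phi.
Proof. apply continuity_antideriv, continuity_Pi. Qed.

Lemma Phi_nonneg s : 0 <= s -> 0 <= Phi s.
Proof.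
  intros Hs. unfold Phi. rewrite <- (antideriv_0 Pi).
  apply (nondecreasing_derive_nonneg Phi Pi 0); [exact continuity_Phi| |lra|exact Hs].
  intros x _. split; [apply derivable_Phi|apply Pi_nonneg].
Qed.

(** [scale s] is the factor [g00^(1/3)] at (P)-time [s]. *)
Definition scale (s : R) := w0 * exp (- (1/3) * Phi s).

Lemma scale_pos s : 0 < scale s.
Proof. apply Rmult_lt_0_compat; [exact w0_pos|apply exp_pos]. Qed.

Lemma scale_0 : scale 0 = w0.
Proof. unfold scale, Phi. rewrite antideriv_0, Rmult_0_r, exp_0. ring. Qed.

Lemma derivable_scale s : derivable_pt_lim scale s (- (1/3) * Pi s * scale s).
Proof.
  unfold scale. replace (- (1/3) * Pi s * (w0 * exp (- (1/3) * Phi s)))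
    with (w0 * (exp (- (1/3) * Phi s) * (- (1/3) * Pi s))) by ring.
  apply derivable_pt_lim_scal, (derivable_pt_lim_exp_fun (fun s => - (1/3) * Phi s)).
  apply derivable_pt_lim_scal, derivable_Phi.
Qed.

Lemma continuity_scale : continuity scale.
Proof. intro s. exact (continuity_pt_derivable_pt_lim _ _ _ (derivable_scale s)). Qed.

Lemma scale_le_w0 s : 0 <= s -> scale s <= w0.
Proof.
  intros Hs. unfold scale. pose proof w0_pos. pose proof (Phi_nonneg s Hs).
  assert (1 <= exp (1/3 * Phi s)) by (pose proof (exp_ineq1_le (1/3 * Phi s)); lra).
  replace (- (1/3) * Phi s) with (- (1/3 * Phi s)) by ring. rewrite exp_Ropp.
  assert (/ exp (1/3 * Phi s) <= / 1) by (apply Rinv_le_contravar; lra). rewrite Rinv_1 in *.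
  nra.
Qed.

(** [Tdot] is [dt/ds], the S3-time elapsed per unit of (P)-time. *)
Definition Tdot (s : R) := / (beta * scale s ^ 2).
Definition T := antideriv Tdot.
Definition kap := beta * w0 ^ 2.

Lemma kap_pos : 0 < kap.
Proof. apply Rmult_lt_0_compat; [exact beta_pos|apply pow_lt, w0_pos]. Qed.

Lemma beta_scale_pos s : 0 < beta * scale s ^ 2.
Proof. apply Rmult_lt_0_compat; [exact beta_pos|apply pow_lt, scale_pos]. Qed.

Lemma Tdot_pos s : 0 < Tdot s.
Proof. apply Rinv_0_lt_compat, beta_scale_pos. Qed.

Lemma continuity_Tdot : continuity Tdot.
Proof.
  intro s. apply continuity_pt_inv; [|apply Rgt_not_eq, beta_scale_pos].
  apply continuity_pt_scal, (continuity_pow_fun scale 2 continuity_scale).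
Qed.

Lemma derivable_T s : derivable_pt_lim T s (Tdot s).
Proof. apply derivable_pt_lim_antideriv, continuity_Tdot. Qed.

Lemma T_0 : T 0 = 0.
Proof. apply antideriv_0. Qed.

Lemma T_linear_growth s : 0 <= s -> s <= kap * T s.
Proof.
  intros Hs. pose proof kap_pos as Hkap.
  assert (Hlin : T 0 - / kap * 0 <= T s - / kap * s).
  { apply (nondecreasing_derive_nonneg (fun x => T x - / kap * x) (fun x => Tdot x - / kap * 1) 0);
      [| |lra|exact Hs].
    - apply continuity_minus; [exact (continuity_antideriv _ continuity_Tdot)|].
      apply continuity_scal, derivable_continuous, derivable_id.
    - intros x Hx. split.
      + apply (derivable_pt_lim_minus T (fun x => / kap * x)); [apply derivable_T|].
        apply (derivable_pt_lim_scal id (/ kap)), derivable_pt_lim_id.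
      + pose proof (scale_pos x). pose proof (scale_le_w0 x ltac:(lra)). pose proof beta_pos.
        enough (/ kap <= Tdot x) by lra.
        unfold Tdot, kap. apply Rinv_le_contravar; [apply beta_scale_pos|].
        apply Rmult_le_compat_l; [lra|]. apply pow_incr; lra. }
  rewrite T_0 in Hlin.
  assert (Hs_kap : / kap * s <= T s) by lra.
  apply (Rmult_le_compat_l kap) in Hs_kap; [|lra].
  rewrite <- Rmult_assoc, Rinv_r, Rmult_1_l in Hs_kap by lra. exact Hs_kap.
Qed.

Definition sigma := Tinv T Tdot kap kap_pos derivable_T T_0 T_linear_growth.

Lemma sigma_0 : sigma 0 = 0.
Proof. apply Tinv_0. Qed.

Lemma sigma_pos t : 0 < t -> 0 < sigma t.
Proof. intros Ht. apply Tinv_pos, Ht. Qed.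

Lemma continuity_sigma : continuity sigma.
Proof. apply continuity_Tinv, Tdot_pos. Qed.

Lemma sigma_T s t : 0 <= t -> T s = t -> sigma t = s.
Proof. intros Ht Hs. apply Tinv_T; [exact Tdot_pos|exact Ht|exact Hs]. Qed.

Lemma is_lim_sigma : is_lim sigma p_infty p_infty.
Proof. apply is_lim_Tinv, Tdot_pos. Qed.

Lemma derivable_sigma t : 0 < t -> derivable_pt_lim sigma t (beta * scale (sigma t) ^ 2).
Proof.
  intros Ht. unfold sigma. rewrite <- (Rinv_inv (beta * _ ^ 2)).
  apply derivable_pt_lim_Tinv; [exact Tdot_pos|exact Ht].
Qed.

Definition rescaled (X : R -> R) (s : R) := X s / scale s.

(** Since [(2/3) rr = pp/3 + qq], dividing by [scale] turns [rr] into [qq]. *)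
Lemma derivable_rescaled X Y Z s :
  derivable_pt_lim X s (- (2/3) * rr (X s) (Y s) (Z s) * X s) -> Pi s = pp (X s) (Y s) (Z s) ->
  derivable_pt_lim (rescaled X) s (- qq (X s) (Y s) (Z s) * rescaled X s).
Proof.
  intros HX HPi. pose proof (scale_pos s).
  replace (- qq (X s) (Y s) (Z s) * rescaled X s)
    with (- (2/3) * rr (X s) (Y s) (Z s) * X s * / scale s
          + X s * (- (- (1/3) * Pi s * scale s) / scale s ^ 2))
    by (unfold rescaled, rr; rewrite HPi; field; lra).
  apply (derivable_pt_lim_mult X (fun s => / scale s)); [exact HX|].
  apply derivable_pt_lim_inv_fun; [lra|apply derivable_scale].
Qed.

Lemma derivable_rescaled_sigma X Y Z t : 0 < t ->
  (forall s, 0 < s -> derivable_pt_lim X s (- (2/3) * rr (X s) (Y s) (Z s) * X s)) ->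
  (forall s, Pi s = pp (X s) (Y s) (Z s)) ->
  derivable_pt_lim (fun t => rescaled X (sigma t)) t
    (- beta * qq (rescaled X (sigma t)) (rescaled Y (sigma t)) (rescaled Z (sigma t))
       * (scale (sigma t) ^ 3) ^ 2 * rescaled X (sigma t)).
Proof.
  intros Ht HX HPi. pose proof (scale_pos (sigma t)).
  unfold rescaled at 2 3 4. rewrite qq_homogeneous by lra.
  replace (- beta * (qq (X (sigma t)) (Y (sigma t)) (Z (sigma t)) / scale (sigma t) ^ 4)
             * (scale (sigma t) ^ 3) ^ 2 * rescaled X (sigma t))
    with (- qq (X (sigma t)) (Y (sigma t)) (Z (sigma t)) * rescaled X (sigma t)
          * (beta * scale (sigma t) ^ 2)) by (field; lra).
  apply (derivable_pt_lim_comp sigma (rescaled X)); [apply derivable_sigma, Ht|].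
  apply derivable_rescaled; [apply HX, sigma_pos, Ht|apply HPi].
Qed.

Lemma derivable_scale_cube_sigma t : 0 < t ->
  derivable_pt_lim (fun t => scale (sigma t) ^ 3) t
    (- beta * pp (rescaled A (sigma t)) (rescaled B (sigma t)) (rescaled C (sigma t))
       * (scale (sigma t) ^ 3) ^ 3).
Proof.
  intros Ht. pose proof (scale_pos (sigma t)).
  unfold rescaled. rewrite pp_homogeneous by lra. fold (Pi (sigma t)).
  replace (- beta * (Pi (sigma t) / scale (sigma t) ^ 4) * (scale (sigma t) ^ 3) ^ 3)
    with (INR 3 * scale (sigma t) ^ pred 3 * (- (1/3) * Pi (sigma t) * scale (sigma t))
          * (beta * scale (sigma t) ^ 2)) by (simpl; field; lra).
  apply (derivable_pt_lim_comp sigma (fun s => scale s ^ 3)); [apply derivable_sigma, Ht|].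
  apply derivable_pt_lim_pow_fun, derivable_scale.
Qed.

Lemma rescaled_0 : rescaled A 0 = h1 /\ rescaled B 0 = h2 /\ rescaled C 0 = h3.
Proof.
  pose proof w0_pos.
  unfold rescaled, A. rewrite scale_0, B_0, C_0.
  split; [|split; field; lra].
  unfold deth. rewrite <- w0_cube. field. lra.
Qed.

Lemma continuity_rescaled_sigma X : continuity X -> continuity (fun t => rescaled X (sigma t)).
Proof.
  intros HX. apply continuity_comp_fun; [exact continuity_sigma|]. intro s.
  apply continuity_pt_div; [apply HX|apply continuity_scale|apply Rgt_not_eq, scale_pos].
Qed.

Lemma S3_solution_exists :
  S3_global_solution h0 h1 h2 h3 (fun t => scale (sigma t) ^ 3)
    (fun t => rescaled A (sigma t)) (fun t => rescaled B (sigma t)) (fun t => rescaled C (sigma t)).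
Proof.
  pose proof continuity_A as HA. destruct continuity_B_C as [HB HC].
  destruct rescaled_0 as [HA0 [HB0 HC0]].
  unfold S3_global_solution. cbv zeta. fold deth beta. rewrite sigma_0, scale_0.
  split; [exact w0_cube|].
  split; [exact HA0|]. split; [exact HB0|]. split; [exact HC0|].
  split; [apply right_cont_at0_continuity_pt, continuity_pow_fun, continuity_comp_fun;
          [exact continuity_sigma|exact continuity_scale]|].
  split; [apply right_cont_at0_continuity_pt, continuity_rescaled_sigma, HA|].
  split; [apply right_cont_at0_continuity_pt, continuity_rescaled_sigma, HB|].
  split; [apply right_cont_at0_continuity_pt, continuity_rescaled_sigma, HC|].
  intros t Ht. split; [|split; [|split]].
  - apply derivable_scale_cube_sigma, Ht.
  - apply derivable_rescaled_sigma; [exact Ht|apply derivable_A_B_C|reflexivity].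
  - apply derivable_rescaled_sigma; [exact Ht|apply derivable_A_B_C|intro s; apply pp_cyclic].
  - apply derivable_rescaled_sigma; [exact Ht|apply derivable_A_B_C|].
    intro s. unfold Pi. rewrite pp_cyclic, pp_cyclic. reflexivity.
Qed.

Section Representation.

Variables g0 g1 g2 g3 : R -> R.
Hypothesis g_solve_S3 : S3_global_solution h0 h1 h2 h3 g0 g1 g2 g3.

Definition G0 := extend0 g0.
Definition G1 := extend0 g1.
Definition G2 := extend0 g2.
Definition G3 := extend0 g3.

Lemma G_0 : G0 0 = h0 /\ G1 0 = h1 /\ G2 0 = h2 /\ G3 0 = h3.
Proof.
  unfold G0, G1, G2, G3. rewrite !extend0_eq by lra.
  destruct g_solve_S3 as [H0 [H1 [H2 [H3 _]]]]. auto.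
Qed.

Lemma derivable_G t : 0 < t ->
  derivable_pt_lim G0 t (- beta * pp (G1 t) (G2 t) (G3 t) * G0 t ^ 3) /\
  derivable_pt_lim G1 t (- beta * qq (G1 t) (G2 t) (G3 t) * G0 t ^ 2 * G1 t) /\
  derivable_pt_lim G2 t (- beta * qq (G2 t) (G3 t) (G1 t) * G0 t ^ 2 * G2 t) /\
  derivable_pt_lim G3 t (- beta * qq (G3 t) (G1 t) (G2 t) * G0 t ^ 2 * G3 t).
Proof.
  intros Ht. destruct g_solve_S3 as [_ [_ [_ [_ [_ [_ [_ [_ Hd]]]]]]]].
  destruct (Hd t Ht) as [D0 [D1 [D2 D3]]].
  unfold G0, G1, G2, G3. rewrite !extend0_eq by lra.
  repeat split; apply derivable_pt_lim_extend0; assumption.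
Qed.

Lemma continuity_G : continuity G0 /\ continuity G1 /\ continuity G2 /\ continuity G3.
Proof.
  destruct g_solve_S3 as [_ [_ [_ [_ [R0 [R1 [R2 [R3 Hd]]]]]]]].
  repeat split; apply continuity_extend0; try assumption; intros t Ht;
    destruct (Hd t Ht) as [D0 [D1 [D2 D3]]]; eapply continuity_pt_derivable_pt_lim; eassumption.
Qed.

Lemma G_pos t : 0 <= t -> 0 < G0 t /\ 0 < G1 t /\ 0 < G2 t /\ 0 < G3 t.
Proof.
  intros Ht. destruct continuity_G as [C0 [C1 [C2 C3]]]. destruct G_0 as [I0 [I1 [I2 I3]]].
  repeat split.
  - apply (linear_ode_pos G0 (fun t => - beta * pp (G1 t) (G2 t) (G3 t) * G0 t ^ 2));
      [assumption|unfold pp; continuity_tac|lra| |exact Ht].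
    intros x Hx. replace (- beta * pp (G1 x) (G2 x) (G3 x) * G0 x ^ 2 * G0 x)
      with (- beta * pp (G1 x) (G2 x) (G3 x) * G0 x ^ 3) by ring. apply derivable_G, Hx.
  - apply (linear_ode_pos G1 (fun t => - beta * qq (G1 t) (G2 t) (G3 t) * G0 t ^ 2));
      [assumption|unfold qq; continuity_tac|lra| |exact Ht].
    intros x Hx. apply derivable_G, Hx.
  - apply (linear_ode_pos G2 (fun t => - beta * qq (G2 t) (G3 t) (G1 t) * G0 t ^ 2));
      [assumption|unfold qq; continuity_tac|lra| |exact Ht].
    intros x Hx. apply derivable_G, Hx.
  - apply (linear_ode_pos G3 (fun t => - beta * qq (G3 t) (G1 t) (G2 t) * G0 t ^ 2));
      [assumption|unfold qq; continuity_tac|lra| |exact Ht].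
    intros x Hx. apply derivable_G, Hx.
Qed.

Lemma G_prod t : 0 <= t -> G0 t * G1 t * G2 t * G3 t = deth.
Proof.
  intros Ht. destruct continuity_G as [C0 [C1 [C2 C3]]]. destruct G_0 as [I0 [I1 [I2 I3]]].
  replace deth with (G0 0 * G1 0 * G2 0 * G3 0) by (unfold deth; congruence).
  apply (constant_derive_0 (fun t => G0 t * G1 t * G2 t * G3 t)); [continuity_tac| |exact Ht].
  intros x Hx. destruct (derivable_G x Hx) as [D0 [D1 [D2 D3]]].
  pose proof (pp_qq_cyclic_sum (G1 x) (G2 x) (G3 x)) as Hsum.
  replace 0 with
    ((((- beta * pp (G1 x) (G2 x) (G3 x) * G0 x ^ 3) * G1 x
        + G0 x * (- beta * qq (G1 x) (G2 x) (G3 x) * G0 x ^ 2 * G1 x)) * G2 x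
      + G0 x * G1 x * (- beta * qq (G2 x) (G3 x) (G1 x) * G0 x ^ 2 * G2 x)) * G3 x
     + G0 x * G1 x * G2 x * (- beta * qq (G3 x) (G1 x) (G2 x) * G0 x ^ 2 * G3 x)).
  - apply (derivable_pt_lim_mult (fun t => G0 t * G1 t * G2 t) G3); [|exact D3].
    apply (derivable_pt_lim_mult (fun t => G0 t * G1 t) G2); [|exact D2].
    apply (derivable_pt_lim_mult G0 G1); assumption.
  - transitivity (- beta * G0 x ^ 3 * G1 x * G2 x * G3 x
                  * (pp (G1 x) (G2 x) (G3 x) + qq (G1 x) (G2 x) (G3 x)
                     + qq (G2 x) (G3 x) (G1 x) + qq (G3 x) (G1 x) (G2 x))); [ring|].
    rewrite Hsum. ring.
Qed.

Definition psi (t : R) := beta * pp (G1 t) (G2 t) (G3 t) * G0 t ^ 2.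

(** [w] is [g00^(1/3)], computed without taking roots. *)
Definition w (t : R) := w0 * exp (- (1/3) * antideriv psi t).

Lemma continuity_psi : continuity psi.
Proof. destruct continuity_G as [C0 [C1 [C2 C3]]]. unfold psi, pp. continuity_tac. Qed.

Lemma w_pos t : 0 < w t.
Proof. apply Rmult_lt_0_compat; [exact w0_pos|apply exp_pos]. Qed.

Lemma w_0 : w 0 = w0.
Proof. unfold w. rewrite antideriv_0, Rmult_0_r, exp_0. ring. Qed.

Lemma derivable_w t : derivable_pt_lim w t (- (1/3) * psi t * w t).
Proof.
  unfold w. replace (- (1/3) * psi t * (w0 * exp (- (1/3) * antideriv psi t)))
    with (w0 * (exp (- (1/3) * antideriv psi t) * (- (1/3) * psi t))) by ring.
  apply derivable_pt_lim_scal, (derivable_pt_lim_exp_fun (fun t => - (1/3) * antideriv psi t)).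
  apply derivable_pt_lim_scal, derivable_pt_lim_antideriv, continuity_psi.
Qed.

Lemma continuity_w : continuity w.
Proof. intro t. exact (continuity_pt_derivable_pt_lim _ _ _ (derivable_w t)). Qed.

Lemma G0_w_cube t : 0 <= t -> G0 t = w t ^ 3.
Proof.
  intros Ht. destruct continuity_G as [C0 _].
  assert (HK : continuity (fun t => - antideriv psi t))
    by (apply continuity_opp, continuity_antideriv, continuity_psi).
  assert (HK' : forall x, 0 < x -> derivable_pt_lim (fun t => - antideriv psi t) x (- psi x))
    by (intros x _; apply (derivable_pt_lim_opp (antideriv psi)), derivable_pt_lim_antideriv, continuity_psi).
  assert (HG0' : forall x, 0 < x -> derivable_pt_lim G0 x (- psi x * G0 x)).
  { intros x Hx. unfold psi.
    replace (- (beta * pp (G1 x) (G2 x) (G3 x) * G0 x ^ 2) * G0 x)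
      with (- beta * pp (G1 x) (G2 x) (G3 x) * G0 x ^ 3) by ring.
    apply derivable_G, Hx. }
  rewrite (linear_ode_exp G0 (fun t => - psi t) _ C0 HK HK' HG0' t Ht).
  unfold w. rewrite Rpow_mult_distr, w0_cube, (proj1 G_0), antideriv_0. f_equal.
  simpl. rewrite Rmult_1_r, <- !exp_plus. apply (f_equal exp). field.
Qed.

(** [sg] is the (P)-time reached at S3-time [t]. *)
Definition sg := antideriv (fun t => beta * w t ^ 2).

Lemma derivable_sg t : derivable_pt_lim sg t (beta * w t ^ 2).
Proof.
  apply (derivable_pt_lim_antideriv (fun t => beta * w t ^ 2)).
  pose proof continuity_w. continuity_tac.
Qed.

Lemma continuity_sg : continuity sg.
Proof. intro t. exact (continuity_pt_derivable_pt_lim _ _ _ (derivable_sg t)). Qed.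

Lemma sg_0 : sg 0 = 0.
Proof. apply antideriv_0. Qed.

Lemma sg_pos t : 0 < t -> 0 < sg t.
Proof.
  intros Ht. rewrite <- sg_0.
  apply (increasing_derive_pos sg (fun t => beta * w t ^ 2) 0); [exact continuity_sg| |lra|exact Ht].
  intros x _. split; [apply derivable_sg|apply Rmult_lt_0_compat; [exact beta_pos|apply pow_lt, w_pos]].
Qed.

Lemma rescaled_G_B_C t : 0 <= t -> w t * G2 t = B (sg t) /\ w t * G3 t = C (sg t).
Proof.
  destruct continuity_G as [_ [_ [C2 C3]]]. destruct continuity_B_C as [HB HC].
  pose proof continuity_w. pose proof continuity_sg.
  intros Ht.
  apply (planar_ode_uniqueness (rhs_b deth) (rhs_c deth) (fun t => beta * w t ^ 2)
           (fun t => w t * G2 t) (fun t => w t * G3 t) (fun t => B (sg t)) (fun t => C (sg t)));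
    [| | | | | | | | | | |exact Ht].
  - intros m M Hm. apply box_lipschitz_rhs_b, Hm.
  - intros m M Hm. apply box_lipschitz_rhs_c, Hm.
  - continuity_tac.
  - continuity_tac.
  - continuity_tac.
  - apply continuity_comp_fun; assumption.
  - apply continuity_comp_fun; assumption.
  - intros x Hx. destruct (G_pos x Hx) as [_ [_ [P2 P3]]]. destruct (B_C_pos (sg x)).
    pose proof (w_pos x). repeat split; try apply Rmult_lt_0_compat; assumption.
  - rewrite w_0, sg_0, B_0, (proj1 (proj2 (proj2 G_0))). reflexivity.
  - rewrite w_0, sg_0, C_0, (proj2 (proj2 (proj2 G_0))). reflexivity.
  - intros x Hx. assert (Hx' : 0 <= x) by lra. cbv beta.
    destruct (derivable_G x Hx) as [_ [_ [D2 D3]]].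
    destruct (derivable_B_C (sg x) (sg_pos x Hx)) as [DB DC].
    destruct (G_pos x Hx') as [_ [_ [P2 P3]]]. pose proof (w_pos x).
    pose proof (derivable_w x) as Dw. unfold psi in Dw.
    rewrite (G0_w_cube x Hx') in D2, D3, Dw.
    assert (Hprod : deth = w x ^ 3 * G1 x * G2 x * G3 x)
      by (rewrite <- (G0_w_cube x Hx'); symmetry; apply G_prod, Hx').
    split; [|split; [|split]].
    + rewrite Hprod, <- rescaled_rhs_b by assumption.
      exact (derivable_pt_lim_mult w G2 x _ _ Dw D2).
    + rewrite Hprod, <- rescaled_rhs_c by assumption.
      exact (derivable_pt_lim_mult w G3 x _ _ Dw D3).
    + rewrite Rmult_comm. exact (derivable_pt_lim_comp sg B x _ _ (derivable_sg x) DB).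
    + rewrite Rmult_comm. exact (derivable_pt_lim_comp sg C x _ _ (derivable_sg x) DC).
Qed.

Lemma A_sg t : 0 <= t -> A (sg t) = w t * G1 t.
Proof.
  intros Ht. destruct (rescaled_G_B_C t Ht) as [HB HC]. destruct (G_pos t Ht) as [_ [_ [P2 P3]]].
  pose proof (w_pos t). unfold A. rewrite <- HB, <- HC, <- (G_prod t Ht), G0_w_cube by exact Ht.
  field. lra.
Qed.

Lemma psi_Pi_sg t : 0 <= t -> psi t = Pi (sg t) * (beta * w t ^ 2).
Proof.
  intros Ht. destruct (rescaled_G_B_C t Ht) as [HB HC].
  unfold psi, Pi. rewrite A_sg, <- HB, <- HC, G0_w_cube by exact Ht. unfold pp. ring.
Qed.

Lemma w_scale_sg t : 0 <= t -> w t = scale (sg t).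
Proof.
  intros Ht.
  assert (HK : continuity (fun t => - (1/3) * Phi (sg t)))
    by (apply continuity_scal, continuity_comp_fun; [exact continuity_sg|exact continuity_Phi]).
  assert (HK' : forall x, 0 < x -> derivable_pt_lim (fun t => - (1/3) * Phi (sg t)) x (- (1/3) * psi x)).
  { intros x Hx. rewrite psi_Pi_sg by lra.
    apply (derivable_pt_lim_scal (fun t => Phi (sg t))).
    exact (derivable_pt_lim_comp sg Phi x _ _ (derivable_sg x) (derivable_Phi (sg x))). }
  rewrite (linear_ode_exp w (fun t => - (1/3) * psi t) _ continuity_w HK HK'
             (fun x _ => derivable_w x) t Ht).
  unfold scale. rewrite w_0, sg_0. unfold Phi at 2. rewrite antideriv_0.
  apply f_equal. apply (f_equal exp). field.
Qed.

Lemma sg_sigma t : 0 <= t -> sg t = sigma t.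
Proof.
  intros Ht. symmetry. apply sigma_T; [exact Ht|].
  assert (HT : continuity (fun t => T (sg t) - t)).
  { apply continuity_minus; [apply continuity_comp_fun; [exact continuity_sg|]|apply derivable_continuous, derivable_id].
    exact (continuity_antideriv _ continuity_Tdot). }
  assert (Hconst : T (sg t) - t = T (sg 0) - 0).
  { apply (constant_derive_0 (fun t => T (sg t) - t) HT); [|exact Ht].
    intros x Hx. pose proof (w_pos x).
    replace 0 with (Tdot (sg x) * (beta * w x ^ 2) - 1).
    - apply (derivable_pt_lim_minus (fun t => T (sg t)) id); [|apply derivable_pt_lim_id].
      exact (derivable_pt_lim_comp sg T x _ _ (derivable_sg x) (derivable_T (sg x))).
    - unfold Tdot. rewrite <- w_scale_sg by lra. field. split; [lra|apply Rgt_not_eq, beta_pos]. }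
  rewrite sg_0, T_0 in Hconst. lra.
Qed.

Lemma S3_solution_representation t : 0 <= t ->
  g0 t = scale (sigma t) ^ 3 /\ g1 t = rescaled A (sigma t) /\
  g2 t = rescaled B (sigma t) /\ g3 t = rescaled C (sigma t).
Proof.
  intros Ht. unfold rescaled. rewrite <- (sg_sigma t Ht), <- (w_scale_sg t Ht), A_sg by exact Ht.
  destruct (rescaled_G_B_C t Ht) as [HB HC]. rewrite <- HB, <- HC.
  assert (E : G0 t = g0 t /\ G1 t = g1 t /\ G2 t = g2 t /\ G3 t = g3 t)
    by (unfold G0, G1, G2, G3; rewrite !extend0_eq by exact Ht; auto).
  destruct E as [E0 [E1 [E2 E3]]]. rewrite <- E0, <- E1, <- E2, <- E3, <- G0_w_cube by exact Ht.
  pose proof (w_pos t). repeat split; field; lra.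
Qed.

End Representation.

Hypotheses (b_to_L : tends_to_at_infty b L) (c_to_L : tends_to_at_infty c L).

Lemma L_cube : L ^ 3 = 4 * deth.
Proof. apply Rpower_third_cube. pose proof deth_pos. lra. Qed.

Lemma is_lim_B_C : is_lim B p_infty L /\ is_lim C p_infty L.
Proof.
  split; (eapply is_lim_ext_nonneg; [intros t Ht; symmetry; apply extend0_eq, Ht|]);
    apply tends_to_at_infty_is_lim; assumption.
Qed.

Lemma A_limit : deth / (L * L) = L / 4.
Proof. pose proof L_pos. replace deth with (L ^ 3 / 4) by (rewrite L_cube; field). field. lra. Qed.

Lemma is_lim_A : is_lim A p_infty (L / 4).
Proof.
  destruct is_lim_B_C as [HB HC]. pose proof L_pos.
  rewrite <- A_limit. apply (is_lim_mult_fin (fun _ => deth) (fun s => / (B s * C s))).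
  - apply is_lim_const.
  - apply is_lim_inv_fin; [nra|]. apply is_lim_mult_fin; assumption.
Qed.

Lemma is_lim_Phi : is_lim Phi p_infty p_infty.
Proof.
  destruct is_lim_B_C as [HB HC]. pose proof L_pos.
  apply (derive_lim_pos_p_infty Phi Pi (pp (L / 4) L L) continuity_Phi derivable_Phi).
  - apply is_lim_pp; [exact is_lim_A|exact HB|exact HC].
  - replace (pp (L / 4) L L) with (9 / 256 * L ^ 4) by (unfold pp; field).
    apply Rmult_lt_0_compat; [lra|apply pow_lt, L_pos].
Qed.

Lemma is_lim_inv_scale : is_lim (fun s => / scale s) p_infty p_infty.
Proof.
  pose proof w0_pos.
  apply (is_lim_ext_nonneg (fun s => / w0 * exp (1/3 * Phi s))).
  - intros s _. unfold scale. rewrite Rinv_mult, <- exp_Ropp.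
    apply f_equal, (f_equal exp). field.
  - apply (is_lim_mult_pos_p_infty (fun _ => / w0) (fun s => exp (1/3 * Phi s)) (/ w0));
      [apply Rinv_0_lt_compat, w0_pos|apply is_lim_const|].
    apply is_lim_exp_scal_p_infty; [lra|exact is_lim_Phi].
Qed.

Lemma is_lim_scale : is_lim scale p_infty 0.
Proof.
  apply (is_lim_ext_nonneg (fun s => / / scale s)).
  - intros s _. apply Rinv_inv.
  - apply (is_lim_inv (fun s => / scale s) p_infty p_infty is_lim_inv_scale). discriminate.
Qed.

Lemma S3_solution_limits g0 g1 g2 g3 :
  (forall t, 0 <= t -> g0 t = scale (sigma t) ^ 3 /\ g1 t = rescaled A (sigma t) /\
                      g2 t = rescaled B (sigma t) /\ g3 t = rescaled C (sigma t)) ->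
  tends_to_at_infty g0 0 /\
  tends_to_infty g1 /\ tends_to_infty g2 /\ tends_to_infty g3 /\
  tends_to_at_infty (fun t => g2 t / g1 t) 4 /\
  tends_to_at_infty (fun t => g2 t / g3 t) 1.
Proof.
  intros Hg. destruct is_lim_B_C as [HB HC]. pose proof L_pos.
  assert (Hsig : forall f (l : Rbar), is_lim f p_infty l -> is_lim (fun t => f (sigma t)) p_infty l)
    by (intros f l Hf; exact (is_lim_comp_p_infty f sigma l Hf is_lim_sigma)).
  assert (Hresc : forall X (l : R), 0 < l -> is_lim X p_infty l ->
                    is_lim (fun t => rescaled X (sigma t)) p_infty p_infty).
  { intros X l Hl HX. apply Hsig. apply (is_lim_mult_pos_p_infty X (fun s => / scale s) l Hl HX is_lim_inv_scale). }
  rewrite !tends_to_at_infty_is_lim, !tends_to_infty_is_lim.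
  split; [|split; [|split; [|split; [|split]]]].
  - apply (is_lim_ext_nonneg (fun t => scale (sigma t) ^ 3)); [intros t Ht; symmetry; apply Hg, Ht|].
    replace 0 with (0 ^ 3) by ring. apply is_lim_pow_fin, Hsig, is_lim_scale.
  - apply (is_lim_ext_nonneg (fun t => rescaled A (sigma t))); [intros t Ht; symmetry; apply Hg, Ht|].
    apply (Hresc A (L / 4)); [lra|exact is_lim_A].
  - apply (is_lim_ext_nonneg (fun t => rescaled B (sigma t))); [intros t Ht; symmetry; apply Hg, Ht|].
    apply (Hresc B L); assumption.
  - apply (is_lim_ext_nonneg (fun t => rescaled C (sigma t))); [intros t Ht; symmetry; apply Hg, Ht|].
    apply (Hresc C L); assumption.
  - apply (is_lim_ext_nonneg (fun t => B (sigma t) * / A (sigma t))).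
    + intros t Ht. destruct (Hg t Ht) as [_ [E1 [E2 _]]]. rewrite E1, E2. unfold rescaled.
      pose proof (scale_pos (sigma t)). pose proof (A_pos (sigma t)). field. lra.
    + replace 4 with (L * / (L / 4)) by (field; lra).
      apply is_lim_mult_fin; [apply Hsig, HB|].
      apply (Hsig (fun s => / A s)), is_lim_inv_fin; [lra|exact is_lim_A].
  - apply (is_lim_ext_nonneg (fun t => B (sigma t) * / C (sigma t))).
    + intros t Ht. destruct (Hg t Ht) as [_ [_ [E2 E3]]]. rewrite E2, E3. unfold rescaled.
      pose proof (scale_pos (sigma t)). destruct (B_C_pos (sigma t)). field. lra.
    + replace 1 with (L * / L) by (field; lra).
      apply is_lim_mult_fin; [apply Hsig, HB|].
      apply (Hsig (fun s => / C s)), is_lim_inv_fin; [lra|exact HC].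
Qed.

End BachFlow.

Theorem theorem5p20 (h0 h1 h2 h3 : R) :
  0 < h0 -> 0 < h1 -> 0 < h2 -> 0 < h3 ->
  h1 <= h2 -> h2 <= h3 ->
  in_D_S h0 h1 h2 h3 ->
  (exists g0 g1 g2 g3 : R -> R, S3_global_solution h0 h1 h2 h3 g0 g1 g2 g3) /\
  (forall g0 g1 g2 g3 : R -> R, S3_global_solution h0 h1 h2 h3 g0 g1 g2 g3 ->
     tends_to_at_infty g0 0 /\
     tends_to_infty g1 /\ tends_to_infty g2 /\ tends_to_infty g3 /\
     tends_to_at_infty (fun t => g2 t / g1 t) 4 /\
     tends_to_at_infty (fun t => g2 t / g3 t) 1).
Proof.
  (* The ordering h1 <= h2 <= h3 only places h in the region a <= b <= c of (P). *)
  intros H0 H1 H2 H3 _ _ [b [c [HP [Hb Hc]]]].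
  split.
  - exact (ex_intro _ _ (ex_intro _ _ (ex_intro _ _ (ex_intro _ _
             (S3_solution_exists h0 h1 h2 h3 H0 H1 H2 H3 b c HP))))).
  - intros g0 g1 g2 g3 HS.
    apply (S3_solution_limits h0 h1 h2 h3 H0 H1 H2 H3 b c HP Hb Hc).
    exact (S3_solution_representation h0 h1 h2 h3 H0 H1 H2 H3 b c HP g0 g1 g2 g3 HS).
Qed.
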